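(* In the setting described in the context, let $\Xi > 0$ be a constant with the following property (P): whenever $1 \leq k \leq q$, $x \in \Omega$ with $-2\Xi^{-1} \leq u_k(x) \leq 0$, and $a_0,\dots,a_{k-1} \geq 0$ with $a_i = 0$ for all $i$ with $u_i(x) \leq -2\Xi^{-1}$, one has $\sum_{i=0}^{k-1} a_i \leq \Xi |(\sum_{i=0}^{k-1} a_i N_i) \wedge N_k|$. Then for every $\gamma \in (0,\frac12)$ there exists $\bar\lambda$ such that for all $\lambda_0 \geq \bar\lambda$ the following holds: if $0 \leq j < k \leq q$ and $x \in \Omega$ satisfies $-\Xi^{-1} \leq \hat u_j(x) \leq 0$ and $-\Xi^{-1} \leq u_k(x) \leq 0$, then $|d\hat u_j \wedge du_k| \geq \Xi^{-1}$ at $x$.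
   Context: $n\ge3$; $u_0,\dots,u_q$ are non-constant linear (affine) functions on $\mathbb{R}^n$ and $\Omega=\bigcap_{m=0}^q\{u_m\le 0\}$ is a compact convex polytope with non-empty interior, such that: (a) for each $k$, $\{u_k>0\}\cap\bigcap_{m\neq k}\{u_m\le0\}\neq\emptyset$; (b) the Euclidean gradient of each $u_k$ is a unit vector $N_k$; (c) for $j<k$, if some $x\in\Omega$ has $u_j(x)=u_k(x)=0$ then $\langle N_j,N_k\rangle\le0$. Fix a smooth even $\eta:\mathbb{R}\to\mathbb{R}$ with $\eta(t)=|t|$ for $|t|\ge\frac12$ and $\eta''\ge0$. For $\gamma\in(0,\frac12)$, $\lambda_0>1$ put $\lambda_k=\gamma^{-k}\lambda_0$, $\hat u_0=u_0$, $\hat u_k=\frac12\big(\hat u_{k-1}+u_k+\lambda_k^{-1}\eta(\lambda_k(\hat u_{k-1}-u_k))\big)$ for $1\le k\le q$. For 1-forms/vectors, $|v\wedge w|$ denotes the Euclidean norm of the wedge product, $|v\wedge w|^2=|v|^2|w|^2-\langle v,w\rangle^2$. *)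

From HB Require Import structures.
From mathcomp Require Import all_boot all_order all_algebra.
From mathcomp Require Import all_classical all_reals all_analysis.
Set Implicit Arguments. Unset Strict Implicit. Unset Printing Implicit Defensive.
Import Order.TTheory GRing.Theory Num.Theory.
Import numFieldNormedType.Exports.
Local Open Scope ring_scope.

Definition edot (R : realType) (n : nat) (v w : 'rV[R]_n) : R :=
  \sum_(i < n) v 0 i * w 0 i.

(* Euclidean norm of the wedge product: |v^w|^2 = |v|^2|w|^2 - <v,w>^2 *)
Definition wedge_norm (R : realType) (n : nat) (v w : 'rV[R]_n) : R :=
  Num.sqrt (edot v v * edot w w - edot v w ^+ 2).

Definition grad (R : realType) (n : nat) (f : 'rV[R]_n -> R) (x : 'rV[R]_n)
  : 'rV[R]_n := \row_(i < n) derive f x (delta_mx 0 i).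

Definition uaff (R : realType) (n : nat) (N : nat -> 'rV[R]_n) (c : nat -> R)
  (k : nat) (x : 'rV[R]_n) : R := edot (N k) x + c k.

Definition lam (R : realType) (gamma lam0 : R) (k : nat) : R :=
  gamma ^- k * lam0.

Fixpoint uhat (R : realType) (n : nat) (eta : R -> R) (gamma lam0 : R)
  (u : nat -> 'rV[R]_n -> R) (k : nat) (x : 'rV[R]_n) : R :=
  match k with
  | 0 => u 0 x
  | k'.+1 =>
      let p := uhat eta gamma lam0 u k' x in
      let l := lam gamma lam0 k in
      (p + u k x + l^-1 * eta (l * (p - u k x))) / 2
  end.

Definition Omega (R : realType) (n : nat) (u : nat -> 'rV[R]_n -> R) (q : nat)
  : set 'rV[R]_n := [set x | forall m, (m <= q)%N -> u m x <= 0].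

From HB Require Import structures.
From mathcomp Require Import all_boot all_order all_algebra.
From mathcomp Require Import all_classical all_reals all_analysis.
From mathcomp Require Import ring lra.
Import Order.TTheory GRing.Theory Num.Theory.
Import numFieldNormedType.Exports.
Local Open Scope ring_scope.
Local Open Scope classical_set_scope.

(* The gradient of uhat_j at x is a convex combination sum_(i <= j) A_i N_i:
   each step uhat_k = smooth_max lambda_k uhat_(k-1) u_k mixes the previous
   gradient with N_k, with weight (1 + eta'(lambda_k (uhat_(k-1) - u_k)))/2 in
   [0, 1].  As eta' = -1 on (-oo, -1] and eta' = 1 on [1, +oo), the weight of N_k
   vanishes unless u_k > uhat_(k-1) - 1/lambda_k and that of the old gradient
   vanishes unless uhat_(k-1) > u_k - 1/lambda_k; since moreover the smoothed
   maximum exceeds the maximum by at most 1/lambda_k <= 1/lambda_0, induction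
   gives u_i(x) >= uhat_j(x) - 2j/lambda_0 whenever A_i <> 0.  For
   lambda_0 >= 2 q Xi and uhat_j(x) >= -1/Xi, every N_i in the support thus has
   u_i(x) > -2/Xi, and property (P) applied to a = A yields
   1 = sum_i A_i <= Xi |d uhat_j /\ d u_k|. *)

Lemma derivable_MVT {R : realType} {f : R -> R} {a b : R} :
  (forall t, derivable f t 1) -> a < b ->
  exists c, f b - f a = derive1 f c * (b - a).
Proof.
move=> df ab.
have fcont : {within `[a, b], continuous f}.
  by apply: derivable_within_continuous => t _; exact: df.
have [c _ ->] := MVT ab (fun t _ => derivableP (df t)) fcont.
by exists c; rewrite derive1E.
Qed.

Lemma is_derive1_comp {R : realType} {f g : R -> R} {t df : R} :
  is_derive t 1 f df -> derivable g (f t) 1 ->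
  is_derive t 1 (g \o f) (derive1 g (f t) * df).
Proof.
move=> fdf dg; have df1 : derivable f t 1 by case: fdf.
apply: DeriveDef.
  by apply/derivable1_diffP/differentiable_comp; exact/derivable1_diffP.
rewrite -derive1E derive1_comp // [derive1 f t]derive1E.
by case: fdf => _ ->.
Qed.

Lemma edot_linr {R : realType} {n : nat} (w v x : 'rV[R]_n) (h : R) :
  edot w (h *: v + x) = h * edot w v + edot w x.
Proof.
by rewrite /edot mulr_sumr -big_split; apply: eq_bigr => i _; rewrite !mxE /=; ring.
Qed.

Lemma edot_sumZl {R : realType} {n M : nat} (a : nat -> R) (w : nat -> 'rV[R]_n)
    (v : 'rV[R]_n) :
  edot (\sum_(i < M) a i *: w i) v = \sum_(i < M) a i * edot (w i) v.
Proof.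
rewrite /edot; under eq_bigr => l _ do rewrite summxE big_distrl.
rewrite exchange_big; apply: eq_bigr => i _; rewrite mulr_sumr.
by apply: eq_bigr => l _; rewrite !mxE mulrA.
Qed.

Lemma edot_delta {R : realType} {n : nat} (w : 'rV[R]_n) (l : 'I_n) :
  edot w (delta_mx 0 l) = w 0 l.
Proof.
rewrite /edot (bigD1 l) //= mxE !eqxx mulr1 big1 ?addr0 // => i /negbTE.
by rewrite mxE => ->; rewrite andbF mulr0.
Qed.

Lemma derive_line {R : realType} {n : nat} (f : 'rV[R]_n -> R) (x v : 'rV[R]_n) :
  derive f x v = derive (fun h : R => f (h *: v + x)) 0 1.
Proof.
rewrite /derive; set g1 := fun h => h^-1 *: _; set g2 := fun h => h^-1 *: _.
suff -> : g1 = g2 by [].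
by apply/funext => h; rewrite /g1 /g2 /= addr0 scale0r add0r [_%:A]mulr1.
Qed.

Lemma grad_eq {R : realType} {n : nat} (f : 'rV[R]_n -> R) (x w : 'rV[R]_n) :
  (forall v : 'rV[R]_n, is_derive (0 : R) 1 (fun h => f (h *: v + x)) (edot w v)) ->
  grad f x = w.
Proof.
move=> df; apply/rowP => l; rewrite mxE derive_line.
by have [_ ->] := df (delta_mx 0 l); rewrite edot_delta.
Qed.

Lemma is_derive_uaff_line {R : realType} {n : nat} (N : nat -> 'rV[R]_n)
    (c : nat -> R) (k : nat) (x v : 'rV[R]_n) :
  is_derive (0 : R) 1 (fun h => uaff N c k (h *: v + x)) (edot (N k) v).
Proof.
have -> : (fun h : R => uaff N c k (h *: v + x)) =
    edot (N k) v *: id + cst (uaff N c k x).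
  by apply/funext => h /=; rewrite /uaff edot_linr -addrA mulrC.
by apply: is_derive_eq; rewrite addr0 [_%:A]mulr1.
Qed.

Lemma grad_uaff {R : realType} {n : nat} (N : nat -> 'rV[R]_n) (c : nat -> R)
    (k : nat) (x : 'rV[R]_n) :
  grad (uaff N c k) x = N k.
Proof. exact/grad_eq/is_derive_uaff_line. Qed.

Lemma lam_gt0 {R : realType} {gamma lam0 : R} (k : nat) :
  0 < gamma -> 0 < lam0 -> 0 < lam gamma lam0 k.
Proof. by move=> g_gt0 l_gt0; rewrite /lam mulr_gt0 // invr_gt0 exprn_gt0. Qed.

Lemma lamV_le {R : realType} {gamma lam0 : R} (k : nat) :
  0 < gamma -> gamma <= 1 -> 0 < lam0 -> (lam gamma lam0 k)^-1 <= lam0^-1.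
Proof.
move=> g_gt0 g_le1 l_gt0; rewrite /lam invfM invrK.
by apply: ler_piMl; rewrite ?invr_ge0 ?exprn_ile1 // ltW.
Qed.

Lemma sum_delta_mul {R : pzSemiRingType} {M k : nat} (F : nat -> R) : (k < M)%N ->
  \sum_(i < M) (i == k :> nat)%:R * F i = F k.
Proof.
move=> kM; under eq_bigr => i _ do rewrite mulr_natl mulrb.
by rewrite -big_mkcond big_ord1_eq kM.
Qed.

Lemma sum_delta {R : pzSemiRingType} {M k : nat} : (k < M)%N ->
  \sum_(i < M) (i == k :> nat)%:R = 1 :> R.
Proof.
move=> kM; rewrite -[RHS](sum_delta_mul (fun=> 1) kM).
by apply: eq_bigr => i _; rewrite mulr1.
Qed.

Section Smoothing.
Context {R : realType}.
Variable eta : R -> R.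
Hypothesis eta_derivable : forall t, derivable eta t 1.
Hypothesis eta'_derivable : forall t, derivable (derive1 eta) t 1.
Hypothesis eta_abs : forall t, 2^-1 <= `|t| -> eta t = `|t|.
Hypothesis eta''_ge0 : forall t, 0 <= derive1 (derive1 eta) t.

Lemma derive1_eta_ge1 (t : R) : 1 <= t -> derive1 eta t = 1.
Proof.
move=> t_ge1; rewrite derive1E (@near_eq_derive _ _ _ eta id t 1) ?derive_id //.
near=> y; have : 2^-1 < y by near: y; apply: lt_nbhsr; lra.
by move=> y_gt; rewrite eta_abs ger0_norm //; lra.
Unshelve. all: by end_near. Qed.

Lemma derive1_eta_leN1 (t : R) : t <= -1 -> derive1 eta t = -1.
Proof.
move=> t_leN1; rewrite derive1E (@near_eq_derive _ _ _ eta -%R t 1).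
  by have [_ ->] := is_deriveNid t 1.
near=> y; have : y < - 2^-1 by near: y; apply: lt_nbhsl; lra.
by move=> y_lt; rewrite eta_abs ler0_norm //; lra.
Unshelve. all: by end_near. Qed.

Lemma derive1_eta_le (a b : R) : a <= b -> derive1 eta a <= derive1 eta b.
Proof.
rewrite le_eqVlt => /predU1P[-> // | ab].
have [c hc] := derivable_MVT eta'_derivable ab.
by rewrite -subr_ge0 hc mulr_ge0 ?eta''_ge0 // subr_ge0 ltW.
Qed.

Lemma derive1_eta_bound (t : R) : -1 <= derive1 eta t <= 1.
Proof.
apply/andP; split.
  have [/derive1_eta_leN1 -> // | t_gt] := leP t (-1).
  by rewrite -(@derive1_eta_leN1 (-1) (lexx _)) derive1_eta_le // ltW.
have [/derive1_eta_ge1 -> // | t_lt] := leP 1 t.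
by rewrite -(@derive1_eta_ge1 1 (lexx _)) derive1_eta_le // ltW.
Qed.

Lemma eta_le_abs (t : R) : eta t <= `|t| + 2.
Proof.
have [t_ge1 | t_lt1] := leP 1 t; first by rewrite eta_abs ?ger0_norm; lra.
have [c hc] := derivable_MVT eta_derivable t_lt1.
have eta1 : eta 1 = 1 by rewrite eta_abs ?normr1 //; lra.
have /andP[c_ge c_le] := derive1_eta_bound c.
have : - t <= `|t| by rewrite -normrN ler_norm.
rewrite eta1 in hc; nra.
Qed.

Definition smooth_max (l p u : R) := (p + u + l^-1 * eta (l * (p - u))) / 2.

Definition smooth_max_weight (l p u : R) := (1 + derive1 eta (l * (p - u))) / 2.

Lemma smooth_max_weight_itv (l p u : R) : 0 <= smooth_max_weight l p u <= 1.
Proof.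
rewrite /smooth_max_weight; have /andP[? ?] := derive1_eta_bound (l * (p - u)).
by apply/andP; split; lra.
Qed.

Lemma smooth_max_le_max (l p u : R) :
  0 < l -> smooth_max l p u <= Num.max p u + l^-1.
Proof.
move=> l_gt0; have lV_gt0 : 0 < l^-1 by rewrite invr_gt0.
have etaE : l^-1 * eta (l * (p - u)) <= `|p - u| + 2 * l^-1.
  apply: le_trans (ler_wpM2l (ltW lV_gt0) (eta_le_abs _)) _.
  by rewrite normrM (gtr0_norm l_gt0) mulrDr mulrA mulVf ?gt_eqF // mul1r mulrC.
rewrite /smooth_max; have [pu | up] := leP p u.
  have : `|p - u| = u - p by rewrite distrC ger0_norm ?subr_ge0.
  lra.
have : `|p - u| = p - u by rewrite ger0_norm ?subr_ge0 ?ltW.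
lra.
Qed.

Lemma smooth_max_le_left {l p u : R} : 0 < l -> smooth_max_weight l p u != 0 ->
  smooth_max l p u <= p + 2 * l^-1.
Proof.
move=> l_gt0 w_neq0; have lV_gt0 : 0 < l^-1 by rewrite invr_gt0.
have lpu_gt : -1 < l * (p - u).
  rewrite ltNge; apply: contra w_neq0 => /derive1_eta_leN1 eta'E.
  by rewrite /smooth_max_weight eta'E subrr mul0r.
have up : u - p < l^-1 by rewrite -(ltr_pM2l l_gt0) mulfV ?gt_eqF //; lra.
apply: le_trans (smooth_max_le_max l p u l_gt0) _.
have : Num.max p u <= p + l^-1 by rewrite ge_max; apply/andP; split; lra.
lra.
Qed.

Lemma smooth_max_le_right {l p u : R} : 0 < l -> smooth_max_weight l p u != 1 ->
  smooth_max l p u <= u + 2 * l^-1.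
Proof.
move=> l_gt0 w_neq1; have lV_gt0 : 0 < l^-1 by rewrite invr_gt0.
have lpu_lt : l * (p - u) < 1.
  rewrite ltNge; apply: contra w_neq1 => /derive1_eta_ge1 eta'E.
  by rewrite /smooth_max_weight eta'E divff.
have pu : p - u < l^-1 by rewrite -(ltr_pM2l l_gt0) mulfV ?gt_eqF //; lra.
apply: le_trans (smooth_max_le_max l p u l_gt0) _.
have : Num.max p u <= u + l^-1 by rewrite ge_max; apply/andP; split; lra.
lra.
Qed.

Lemma is_derive_smooth_max {f g : R -> R} {t a b l : R} : l != 0 ->
  is_derive t 1 f a -> is_derive t 1 g b ->
  is_derive t 1 (fun h => smooth_max l (f h) (g h))
    (smooth_max_weight l (f t) (g t) * a
     + (1 - smooth_max_weight l (f t) (g t)) * b).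
Proof.
move=> l_neq0 fa gb.
have lfg : is_derive t 1 (l *: (f - g)) (l *: (a - b)) by exact: is_deriveZ.
have := is_derive1_comp lfg (eta_derivable _) => eta_lfg.
have -> : (fun h => smooth_max l (f h) (g h)) =
    2^-1 *: (f + g + l^-1 *: (eta \o (l *: (f - g)))).
  by apply/funext => h; rewrite /smooth_max /= mulrC.
apply: is_derive_eq; rewrite /smooth_max_weight.
have -> : (l *: (f - g)) t = l * (f t - g t) by [].
have scaleE (r s : R) : r *: s = r * s by [].
by rewrite !scaleE; field.
Qed.

Context {n : nat}.
Variables (N : nat -> 'rV[R]_n) (c : nat -> R) (gamma lam0 : R) (x : 'rV[R]_n).
Hypotheses (gamma_gt0 : 0 < gamma) (gamma_le1 : gamma <= 1).
Hypothesis lam0_gt0 : 0 < lam0.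

Local Notation u := (uaff N c).
Local Notation uh := (uhat eta gamma lam0 (uaff N c)).

Lemma uhatS j y :
  uh j.+1 y = smooth_max (lam gamma lam0 j.+1) (uh j y) (u j.+1 y).
Proof. by []. Qed.

Definition uhat_mix (j : nat) : R :=
  smooth_max_weight (lam gamma lam0 j.+1) (uh j x) (u j.+1 x).

Fixpoint uhat_weight (j : nat) : nat -> R :=
  match j with
  | 0 => fun i => (i == 0)%:R
  | j.+1 => fun i =>
      uhat_mix j * uhat_weight j i + (1 - uhat_mix j) * (i == j.+1)%:R
  end.

Lemma uhat_weight_eq0 j i : (j < i)%N -> uhat_weight j i = 0.
Proof.
elim: j i => [|j IH] [|i] //= ji.
by rewrite IH ?(ltnW ji) // gtn_eqF // mulr0 mulr0 addr0.
Qed.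

Lemma uhat_weight_sum j M : (j < M)%N -> \sum_(i < M) uhat_weight j i = 1.
Proof.
elim: j => [|j IH] jM /=; first exact: sum_delta.
rewrite big_split /= -!mulr_sumr IH ?(ltnW jM) // sum_delta //.
by rewrite !mulr1 addrC subrK.
Qed.

Lemma uhat_weight_ge0 j i : 0 <= uhat_weight j i.
Proof.
elim: j i => [|j IH] i /=; first exact: ler0n.
have /andP[s_ge0 s_le1] :=
  smooth_max_weight_itv (lam gamma lam0 j.+1) (uh j x) (u j.+1 x).
by rewrite addr_ge0 // mulr_ge0 // ?subr_ge0 ?ler0n.
Qed.

Lemma uhat_weight_neq0_le j i :
  uhat_weight j i != 0 -> uh j x <= u i x + 2 * j%:R / lam0.
Proof.
elim: j i => [|j IH] i.
  case: i => [|i] /=; last by rewrite mulr0n eqxx.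
  by rewrite mulr0n mulr0 mul0r addr0.
have l_gt0 := lam_gt0 j.+1 gamma_gt0 lam0_gt0.
have lV_le := lamV_le j.+1 gamma_gt0 gamma_le1 lam0_gt0.
rewrite uhatS /= -[(j.+1)%:R]natr1; have [ij | ji | ->] := ltngtP i j.+1.
- rewrite mulr0n mulr0 addr0 mulf_eq0 negb_or => /andP[s_neq0 w_neq0].
  have := smooth_max_le_left l_gt0 s_neq0.
  have := IH i w_neq0; lra.
- by rewrite uhat_weight_eq0 1?ltnW // mulr0n !mulr0 addr0 eqxx.
- rewrite uhat_weight_eq0 // mulr0 add0r mulr1n mulr1 subr_eq0 eq_sym => s_neq1.
  have := smooth_max_le_right l_gt0 s_neq1.
  have : 0 <= j%:R / lam0 by rewrite divr_ge0 ?ler0n ?ltW.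
  lra.
Qed.

Lemma is_derive_uhat_line j M (v : 'rV[R]_n) : (j < M)%N ->
  is_derive (0 : R) 1 (fun h => uh j (h *: v + x))
    (\sum_(i < M) uhat_weight j i * edot (N i) v).
Proof.
elim: j => [|j IH] jM.
  apply: is_derive_eq (is_derive_uaff_line N c 0 x v) _.
  exact: esym (sum_delta_mul (fun i => edot (N i) v) jM).
have l_neq0 : lam gamma lam0 j.+1 != 0.
  by rewrite gt_eqF // lam_gt0.
have := is_derive_smooth_max l_neq0 (IH (ltnW jM))
  (is_derive_uaff_line N c j.+1 x v).
rewrite /= scale0r add0r => duh; apply: is_derive_eq duh _.
rewrite [in RHS](eq_bigr (fun i : 'I_M =>
    uhat_mix j * (uhat_weight j i * edot (N i) v)
    + (1 - uhat_mix j) * ((i == j.+1 :> nat)%:R * edot (N i) v))) => [|i _].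
  by rewrite big_split -!mulr_sumr (sum_delta_mul (fun k => edot (N k) v)).
by rewrite mulrDl !mulrA.
Qed.

Lemma grad_uhat {j M : nat} : (j < M)%N ->
  grad (uh j) x = \sum_(i < M) uhat_weight j i *: N i.
Proof.
by move=> jM; apply: grad_eq => v; rewrite edot_sumZl; exact: is_derive_uhat_line.
Qed.

Lemma grad_uhat_wedge_ge (Xi : R) j k :
  0 < Xi -> (j < k)%N -> 2 * j%:R * Xi < lam0 -> - Xi^-1 <= uh j x ->
  (forall a : nat -> R, (forall i, (i < k)%N -> 0 <= a i) ->
     (forall i, (i < k)%N -> u i x <= - (2 / Xi) -> a i = 0) ->
     \sum_(i < k) a i <= Xi * wedge_norm (\sum_(i < k) a i *: N i) (N k)) ->
  Xi^-1 <= wedge_norm (grad (uh j) x) (grad (u k) x).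
Proof.
move=> Xi_gt0 jk lam0_big uhj_ge wedge_ge.
have gap : 2 * j%:R / lam0 < Xi^-1.
  by rewrite ltr_pdivrMr // [Xi^-1 * _]mulrC ltr_pdivlMr.
have far_eq0 i : (i < k)%N -> u i x <= - (2 / Xi) -> uhat_weight j i = 0.
  move=> _ ui_le; apply/eqP; apply: contraTT ui_le => /uhat_weight_neq0_le ui_ge.
  by rewrite -ltNge; lra.
have := wedge_ge _ (fun i _ => uhat_weight_ge0 j i) far_eq0.
rewrite uhat_weight_sum // grad_uaff (grad_uhat jk).
by move=> one_le; rewrite -(ler_pM2l Xi_gt0) mulfV ?gt_eqF.
Qed.
End Smoothing.

Theorem lemma2p11 (R : realType) (n q : nat) (N : nat -> 'rV[R]_n) (c : nat -> R)
  (eta : R -> R) (Xi : R) :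
  (3 <= n)%N ->
  (* unit gradients *)
  (forall k, (k <= q)%N -> edot (N k) (N k) = 1) ->
  (* Omega compact with nonempty interior *)
  compact (Omega (uaff N c) q) ->
  (exists x, (Omega (uaff N c) q)° x) ->
  (* (a) *)
  (forall k, (k <= q)%N -> exists x, 0 < uaff N c k x /\
      (forall m, (m <= q)%N -> m <> k -> uaff N c m x <= 0)) ->
  (* (c) *)
  (forall j k, (j < k)%N -> (k <= q)%N ->
     (exists x, Omega (uaff N c) q x /\ uaff N c j x = 0 /\ uaff N c k x = 0) ->
     edot (N j) (N k) <= 0) ->
  (* eta smooth, even, |t| for |t| >= 1/2, eta'' >= 0 *)
  (forall m t, derivable (derive1n m eta) t 1) ->
  (forall t, eta (- t) = eta t) ->
  (forall t, 2^-1 <= `|t| -> eta t = `|t|) ->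
  (forall t, 0 <= derive1n 2 eta t) ->
  (* property (P) *)
  0 < Xi ->
  (forall k x (a : nat -> R), (1 <= k <= q)%N -> Omega (uaff N c) q x ->
     - (2 / Xi) <= uaff N c k x <= 0 ->
     (forall i, (i < k)%N -> 0 <= a i) ->
     (forall i, (i < k)%N -> uaff N c i x <= - (2 / Xi) -> a i = 0) ->
     \sum_(i < k) a i <= Xi * wedge_norm (\sum_(i < k) a i *: N i) (N k)) ->
  forall gamma, 0 < gamma < 2^-1 ->
  exists lambar : R, forall lam0, 1 < lam0 -> lambar <= lam0 ->
  forall j k x, (j < k)%N -> (k <= q)%N -> Omega (uaff N c) q x ->
    - Xi^-1 <= uhat eta gamma lam0 (uaff N c) j x <= 0 ->
    - Xi^-1 <= uaff N c k x <= 0 ->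
    Xi^-1 <= wedge_norm (grad (uhat eta gamma lam0 (uaff N c) j) x)
                        (grad (uaff N c k) x).
Proof.
(* Only the shape of eta and property (P) are used. *)
move=> _ _ _ _ _ _ eta_der _ eta_abs eta''_ge0 Xi_gt0 propP gamma /andP[g_gt0 g_lt].
exists (2 * q%:R * Xi) => lam0 lam0_gt1 lam0_ge j k x jk kq x_in.
move=> /andP[uhj_ge _] /andP[uk_ge uk_le].
have g_le1 : gamma <= 1 by lra.
have lam0_gt0 : 0 < lam0 by lra.
have lam0_big : 2 * j%:R * Xi < lam0.
  have : j%:R < q%:R :> R by rewrite ltr_nat (leq_trans jk kq).
  nra.
have k_itv : (1 <= k <= q)%N by rewrite kq andbT (leq_ltn_trans _ jk).
have uk_itv : - (2 / Xi) <= uaff N c k x <= 0 by apply/andP; split; lra.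
apply: (grad_uhat_wedge_ge _ (eta_der 0%N) (eta_der 1%N) eta_abs eta''_ge0
  N c gamma lam0 x g_gt0 g_le1 lam0_gt0 Xi j k Xi_gt0 jk lam0_big uhj_ge).
by move=> a; apply: propP.
Qed.
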